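(* Fix constants $\lambda>0$ and $\epsilon>0$. For each $n$, let $k=\frac{\lambda n}{\log n}$ be the number of defectives, and let the defective set $\mathcal{K}\subseteq\{1,\dots,n\}$ be drawn uniformly at random among all subsets of size $k$ (combinatorial prior). Let $$T=(1+\epsilon)\frac{\lambda}{\log^2 2}\,n$$ and form a near-constant tests-per-item design with $T$ tests: each of the $n$ items, independently, draws $L=\frac{T\log 2}{k}$ tests uniformly at random with replacement from the $T$ tests and is included in each drawn test. Then the probability that the COMP decoder outputs exactly $\mathcal{K}$ is $1-o(1)$ as $n\to\infty$.
   Context: $\log$ denotes the natural logarithm. Nonadaptive group testing: a test is a subset of items, and its outcome is positive iff it contains at least one defective item (the logical OR of the defectivity indicators of its items). All tests are fixed before any outcomes are seen. The COMP decoder declares every item that appears in at least one negative test to be nondefective, and declares all remaining items defective. *)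

From HB Require Import structures.
From mathcomp Require Import all_boot all_order all_algebra.
From mathcomp Require Import all_classical all_reals all_analysis.
Set Implicit Arguments. Unset Strict Implicit. Unset Printing Implicit Defensive.
Import Order.TTheory GRing.Theory Num.Theory.
Local Open Scope ring_scope.

Definition kdef (R : realType) (lam : R) (n : nat) : nat :=
  Num.truncn (lam * n%:R / ln (n%:R : R)).

Definition Tdef (R : realType) (lam eps : R) (n : nat) : nat :=
  Num.truncn ((1 + eps) * lam / (ln (2 : R)) ^+ 2 * n%:R).

Definition Ldef (R : realType) (lam eps : R) (n : nat) : nat :=
  Num.truncn ((Tdef lam eps n)%:R * ln (2 : R) / (kdef lam n)%:R).

(* A near-constant tests-per-item design: item x draws tests X x j, j < L,
   uniformly with replacement from the T tests. *)
Definition design (n L T : nat) := {ffun 'I_n -> {ffun 'I_L -> 'I_T}}.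

Definition in_test (n L T : nat) (X : design n L T) (x : 'I_n) (t : 'I_T) : bool :=
  [exists j : 'I_L, X x j == t].

Definition test_positive (n L T : nat) (X : design n L T) (K : {set 'I_n}) (t : 'I_T) : bool :=
  [exists y in K, in_test X y t].

Definition comp_output (n L T : nat) (X : design n L T) (K : {set 'I_n}) : {set 'I_n} :=
  [set x | [forall t : 'I_T, in_test X x t ==> test_positive X K t]].

Definition comp_success_prob (R : realType) (n k L T : nat) : R :=
  (#|[set p : {set 'I_n} * design n L T | (#|p.1| == k) && (comp_output p.2 p.1 == p.1)]|)%:R
  / (#|[set K : {set 'I_n} | #|K| == k]| * #|[set: design n L T]|)%:R.

Definition comp_prob (R : realType) (lam eps : R) (n : nat) : R :=
  comp_success_prob R n (kdef lam n) (Ldef lam eps n) (Tdef lam eps n).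

From HB Require Import structures.
From mathcomp Require Import all_boot all_order all_algebra.
From mathcomp Require Import all_classical all_reals all_analysis.
From mathcomp Require Import finset fintype perm.
From mathcomp Require Import lra ring.
Import Order.TTheory GRing.Theory Num.Theory.
Import numFieldNormedType.Exports.
Local Open Scope ring_scope.
Set Implicit Arguments. Unset Strict Implicit. Unset Printing Implicit Defensive.

(* Fix the defective set K. COMP errs only if some nondefective x is covered:
   every test containing x also contains a defective. Resampling one draw at a
   time shows that the tests hit by the kL draws of the defectives behave no
   worse than independent coins of bias q = 1 - (1 - 1/T)^(kL): all tests of a
   set D are hit with probability at most q^|D|. Each of the L draws of x then
   lands in a hit test with probability at most q + L/T, so a union bound gives
   failure probability at most n (q + L/T)^L. With L ~ T log 2 / k we get
   q <= 1/2 + o(1) and L/T = o(1), while L >= (1 + eps) log2 n - O(1); hence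
   n (q + L/T)^L <= n^(-eps/2 + o(1)) -> 0. *)

Section Resampling.
Variables (R : numFieldType) (n L T : nat).
Implicit Types (X Y : design n L T) (p q : 'I_n * 'I_L).

Definition draw X p : 'I_T := X p.1 p.2.

Definition set_draw X p (t : 'I_T) : design n L T :=
  [ffun y => if y == p.1 then [ffun j => if j == p.2 then t else X y j] else X y].

Lemma design_ext X Y : (forall p, draw X p = draw Y p) -> X = Y.
Proof. by move=> eXY; apply/ffunP => y; apply/ffunP => j; apply: (eXY (y, j)). Qed.

Lemma draw_set_draw X p t q : draw (set_draw X p t) q = if q == p then t else draw X q.
Proof.
case: p q => y i [z j]; rewrite /draw /set_draw /= !ffunE xpair_eqE.
by case: (z == y) => //=; rewrite ffunE.
Qed.

Lemma set_draw_set_draw X p s t : set_draw (set_draw X p s) p t = set_draw X p t.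
Proof. by apply: design_ext => q; rewrite !draw_set_draw; case: eqP. Qed.

Lemma set_draw_id X p : set_draw X p (draw X p) = X.
Proof. by apply: design_ext => q; rewrite draw_set_draw; case: eqP => [->|]. Qed.

Lemma sum_draw_eq_indep (G : design n L T -> R) p t :
    (forall X s, G (set_draw X p s) = G X) ->
  \sum_X (draw X p == t)%:R * G X = T%:R^-1 * \sum_X G X.
Proof.
move=> G_indep; have T_gt0 : (0 < T)%N by case: T t {G_indep} => [[]|].
have sum_drawE s : \sum_X (draw X p == s)%:R * G X = \sum_X (draw X p == t)%:R * G X.
  pose swap X := set_draw X p (tperm s t (draw X p)).
  have swapK : involutive swap.
    by move=> X; rewrite /swap draw_set_draw eqxx set_draw_set_draw tpermK set_draw_id.
  rewrite (reindex_inj (inv_inj swapK)); apply: eq_bigr => X _.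
  by rewrite /swap draw_set_draw eqxx G_indep (canF_eq (tpermK s t)) tpermL.
have -> : \sum_X G X = \sum_(s : 'I_T) \sum_X (draw X p == s)%:R * G X.
  rewrite exchange_big; apply: eq_bigr => X _ /=; rewrite -mulr_suml.
  rewrite (bigD1 (draw X p)) //= eqxx big1 ?addr0 ?mul1r // => s /negbTE.
  by rewrite eq_sym => ->.
rewrite (eq_bigr _ (fun s _ => sum_drawE s)) sumr_const card_ord.
by set x := \sum_X _; rewrite -(mulr_natl x) mulKf // pnatr_eq0 -lt0n.
Qed.

Lemma sum_resample (F : design n L T -> 'I_T -> R) p :
    (forall X s t, F (set_draw X p s) t = F X t) ->
  \sum_X F X (draw X p) = T%:R^-1 * \sum_(t : 'I_T) \sum_X F X t.
Proof.
move=> F_indep; rewrite mulr_sumr.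
under [RHS]eq_bigr => t _ do rewrite -(sum_draw_eq_indep t (fun X s => F_indep X s t)).
rewrite exchange_big; apply: eq_bigr => X _ /=.
rewrite (bigD1 (draw X p)) //= eqxx mul1r big1 ?addr0 // => t /negbTE.
by rewrite eq_sym => ->; rewrite mul0r.
Qed.

End Resampling.

Definition p_hit (R : numFieldType) (T m : nat) : R := 1 - (1 - T%:R^-1) ^+ m.

Section HitProbability.
Variables (R : numFieldType) (T : nat).
Hypothesis T_gt0 : (0 < T)%N.
Local Notation p_hit := (p_hit R T).

Lemma p_hitS m : p_hit m.+1 = p_hit m + (1 - p_hit m) / T%:R.
Proof. by rewrite /p_hit exprS subKr; ring. Qed.

Lemma miss_prob_ge0 : 0 <= 1 - T%:R^-1 :> R.
Proof. by rewrite subr_ge0 invf_le1 ?ltr0n // ler1n. Qed.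

Lemma p_hit_ge0 m : 0 <= p_hit m.
Proof. by rewrite subr_ge0 exprn_ile1 ?miss_prob_ge0 // lerBlDr lerDl invr_ge0. Qed.

Lemma p_hit_le1 m : p_hit m <= 1.
Proof. by rewrite lerBlDr lerDl exprn_ge0 ?miss_prob_ge0. Qed.

End HitProbability.

Lemma sum_fun_mem (R : pzRingType) (U : finType) (A : {set U}) (F : bool -> R) :
  \sum_(u : U) F (u \in A) = #|A|%:R * F true + (#|U| - #|A|)%:R * F false.
Proof.
rewrite (bigID (mem A)) /= (eq_bigr (fun=> F true)) => [|u ->//].
rewrite [X in _ + X](eq_bigr (fun=> F false)) => [|u /negbTE->//].
by rewrite !sumr_const !mulr_natl -(cardC A) addKn.
Qed.

Lemma exprD_ge_linear (R : realFieldType) (a b : R) d : 0 <= a -> 0 <= b ->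
  a ^+ d + d%:R * a ^+ d.-1 * b <= (a + b) ^+ d.
Proof.
move=> a_ge0 b_ge0; elim: d => [|d IH]; first by rewrite mul0r mul0r addr0.
rewrite exprS [in leRHS]exprS -natr1 /=.
apply: le_trans (ler_wpM2l (addr_ge0 a_ge0 b_ge0) IH).
have shift : d%:R * (a * a ^+ d.-1) = d%:R * a ^+ d.
  by case: d {IH} => [|d]; rewrite ?mul0r // exprS.
have : 0 <= d%:R * a ^+ d.-1 * b * b by rewrite !mulr_ge0 ?exprn_ge0.
nra.
Qed.

Section MeanOverTests.
Variables (R : realFieldType) (T : nat).
Hypothesis T_gt0 : (0 < T)%N.
Implicit Types D : {set 'I_T}.

Lemma T_neq0 : T%:R != 0 :> R.
Proof. by rewrite pnatr_eq0 -lt0n. Qed.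

Lemma card_le_T D : (#|D| <= T)%N.
Proof. by rewrite -[X in (_ <= X)%N](card_ord T) max_card. Qed.

Lemma mean_expr_cardsD1_le (a : R) D : 0 <= a -> a <= 1 ->
  T%:R^-1 * \sum_(t : 'I_T) a ^+ #|D :\ t| <= (a + (1 - a) / T%:R) ^+ #|D|.
Proof.
move=> a_ge0 a_le1.
rewrite (eq_bigr (fun t => (fun b : bool => a ^+ (#|D| - b)) (t \in D))); last first.
  by move=> t _; rewrite [in RHS](cardsD1 t D) addKn.
have := sum_fun_mem D (fun b : bool => a ^+ (#|D| - b)).
rewrite /= card_ord subn0 subn1 => ->.
have b_ge0 : 0 <= (1 - a) / T%:R by rewrite divr_ge0 ?subr_ge0.
apply: le_trans (exprD_ge_linear _ a_ge0 b_ge0).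
have := card_le_T D; case: #|D| => [|d] dT.
  by rewrite subn0 !mul0r !add0r addr0 mulKf ?T_neq0.
by rewrite (natrB R dT) exprS /= le_eqVlt; apply/predU1l; field; rewrite T_neq0.
Qed.

Lemma mean_expr_cardsU1_le (q : R) D l : 0 <= q -> (#|D| <= l)%N ->
  T%:R^-1 * \sum_(t : 'I_T) q ^+ #|t |: D| <= q ^+ #|D| * (q + l%:R / T%:R).
Proof.
move=> q_ge0 Dl.
rewrite (eq_bigr (fun t => (fun b : bool => q ^+ (#|D| + ~~ b)) (t \in D))); last first.
  by move=> t _; rewrite cardsU1 addnC.
have := sum_fun_mem D (fun b : bool => q ^+ (#|D| + ~~ b)).
rewrite /= card_ord addn0 addn1 => ->.
have qD_ge0 : 0 <= q ^+ #|D| by rewrite exprn_ge0.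
rewrite (natrB R (card_le_T D)) exprS mulrC ler_pdivrMr ?ltr0n //.
rewrite -mulrA [_ * T%:R]mulrDl divfK ?T_neq0 //.
have : #|D|%:R * q ^+ #|D| <= l%:R * q ^+ #|D| by rewrite ler_wpM2r ?ler_nat.
have : 0 <= #|D|%:R * q ^+ #|D| * q by rewrite !mulr_ge0.
nra.
Qed.

End MeanOverTests.

Section HitBounds.
Variables (R : realFieldType) (n L T : nat).
Hypothesis T_gt0 : (0 < T)%N.
Implicit Types (X : design n L T) (p : 'I_n * 'I_L) (S : {set 'I_n * 'I_L}) (D : {set 'I_T}).
Local Notation N := (#|{: design n L T}|%:R : R).
Local Notation p_hit := (p_hit R T).

Definition tests_of S X : {set 'I_T} := [set draw X p | p in S].

Lemma tests_of_set_draw S X p t :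
  p \notin S -> tests_of S (set_draw X p t) = tests_of S X.
Proof.
move=> pS; apply: eq_in_imset => q qS; rewrite draw_set_draw.
by case: eqP => // qp; rewrite -qp qS in pS.
Qed.

Lemma tests_ofD1 S X p : p \in S -> tests_of S X = draw X p |: tests_of (S :\ p) X.
Proof. by move=> pS; rewrite /tests_of -{1}(setD1K pS) imsetU1. Qed.

(* The events "t is hit", t in D, are negatively correlated. *)
Lemma sum_subset_tests_of_le S D :
  \sum_X (D \subset tests_of S X)%:R <= N * p_hit #|S| ^+ #|D|.
Proof.
move Sm: #|S| => m; elim: m S D Sm => [|m IH] S D Sm.
  move/cards0_eq: Sm => ->; rewrite /p_hit expr0 subrr expr0n cards_eq0.
  under eq_bigr => X _ do rewrite /tests_of imset0 subset0.
  by rewrite sumr_const mulrC mulr_natr.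
have [p pS] : exists p, p \in S by apply/set0Pn; rewrite -card_gt0 Sm.
have S'm : #|S :\ p| = m by move: Sm; rewrite (cardsD1 p S) pS => -[].
under eq_bigr => X _ do rewrite (tests_ofD1 X pS) -subDset.
rewrite (sum_resample (F := fun X t =>
  ((D :\ t \subset tests_of (S :\ p) X)%:R : R))); last first.
  by move=> X s t; rewrite tests_of_set_draw // !inE eqxx.
apply: le_trans (_ : T%:R^-1 * \sum_(t : 'I_T) (N * p_hit m ^+ #|D :\ t|) <= _).
  by apply: ler_wpM2l; rewrite ?invr_ge0 //; apply: ler_sum => t _; exact: IH.
rewrite -mulr_sumr mulrCA ler_wpM2l // p_hitS.
by apply: mean_expr_cardsD1_le => //; [exact: p_hit_ge0 | exact: p_hit_le1].
Qed.

(* Each draw of S' either lands in D, with probability at most |D|/T <= l/T,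
   or must hit a fresh test, with probability at most q. *)
Lemma sum_subset_tests_of_disjoint_le S S' D l :
    [disjoint S' & S] -> (#|D| + #|S'| <= l)%N ->
  \sum_X ((D :|: tests_of S' X) \subset tests_of S X)%:R <=
    N * p_hit #|S| ^+ #|D| * (p_hit #|S| + l%:R / T%:R) ^+ #|S'|.
Proof.
set q := p_hit #|S|; set r := q + l%:R / T%:R.
move=> S'S; move Sm: #|S'| => m; elim: m S' D Sm S'S => [|m IH] S' D Sm S'S Dl.
  move/cards0_eq: Sm => ->; rewrite expr0 mulr1.
  under eq_bigr do rewrite /tests_of imset0 setU0.
  exact: sum_subset_tests_of_le.
have [p pS'] : exists p, p \in S' by apply/set0Pn; rewrite -card_gt0 Sm.
have S''m : #|S' :\ p| = m by move: Sm; rewrite (cardsD1 p S') pS' => -[].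
have S''S : [disjoint S' :\ p & S] by apply: disjointWl S'S; apply: subD1set.
under eq_bigr => X _ do rewrite (tests_ofD1 X pS') setUA [D :|: _]setUC.
rewrite (sum_resample (F := fun X t =>
  (((t |: D) :|: tests_of (S' :\ p) X \subset tests_of S X)%:R : R))); last first.
  move=> X s t; rewrite !tests_of_set_draw ?(disjointFr S'S pS') //.
  by rewrite !inE eqxx.
apply: le_trans (_ : T%:R^-1 * \sum_(t : 'I_T) (N * r ^+ m * q ^+ #|t |: D|) <= _).
  apply: ler_wpM2l; rewrite ?invr_ge0 //; apply: ler_sum => t _.
  rewrite mulrAC; apply: IH => //.
  by apply: leq_trans Dl; rewrite addnS -addSn leq_add2r cardsU1 -add1n leq_add2r leq_b1.
have q_ge0 : 0 <= q by exact: p_hit_ge0.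
have r_ge0 : 0 <= r by rewrite addr_ge0 ?divr_ge0.
rewrite -mulr_sumr mulrCA.
have Dl' := leq_trans (leq_addr _ _) Dl.
apply: le_trans (ler_wpM2l _ (mean_expr_cardsU1_le T_gt0 q_ge0 Dl')) _.
  by rewrite mulr_ge0 ?exprn_ge0.
by rewrite exprS -/r le_eqVlt; apply/predU1l; ring.
Qed.

End HitBounds.

Section CompDecoder.
Variables (n L T : nat).
Implicit Types (X : design n L T) (K A : {set 'I_n}) (x : 'I_n).

Definition draws_of A : {set 'I_n * 'I_L} := setX A [set: 'I_L].

Lemma card_draws_of A : #|draws_of A| = (#|A| * L)%N.
Proof. by rewrite cardsX cardsT card_ord. Qed.

Lemma test_positiveE X K t : test_positive X K t = (t \in tests_of (draws_of K) X).
Proof.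
apply/existsP/imsetP => [[y /andP[yK /existsP[j /eqP <-]]] | [[y j]]].
  by exists (y, j); rewrite // !inE yK.
by rewrite !inE andbT => yK ->; exists y; rewrite yK; apply/existsP; exists j.
Qed.

Lemma in_testE X x t : in_test X x t = test_positive X [set x] t.
Proof.
apply/idP/existsP => [xt | [y /andP[/set1P-> //]]].
by exists x; rewrite set11.
Qed.

Lemma in_comp_output X K x :
  (x \in comp_output X K) = (tests_of (draws_of [set x]) X \subset tests_of (draws_of K) X).
Proof.
rewrite inE; apply/forallP/subsetP => [xK t | xK t].
  by rewrite -!test_positiveE -in_testE => /(implyP (xK t)).
by apply/implyP; rewrite in_testE !test_positiveE => /xK.
Qed.

Lemma sub_comp_output X K : K \subset comp_output X K.
Proof.
apply/subsetP => x xK; rewrite in_comp_output; apply: imsetS.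
by apply: setXS; rewrite ?sub1set.
Qed.

End CompDecoder.

Definition cover_base (R : numFieldType) (k L T : nat) : R :=
  p_hit R T (k * L) + L%:R / T%:R.

Definition cover_bound (R : numFieldType) (k L T : nat) : R := cover_base R k L T ^+ L.

Lemma cover_base_ge0 (R : numFieldType) k L T : (0 < T)%N -> 0 <= cover_base R k L T.
Proof. by move=> T_gt0; rewrite addr_ge0 ?divr_ge0 ?p_hit_ge0. Qed.

Section UnionBound.
Variables (R : realFieldType) (n L T : nat).
Hypothesis T_gt0 : (0 < T)%N.
Implicit Types (X : design n L T) (K : {set 'I_n}).
Local Notation N := (#|{: design n L T}|%:R : R).

Lemma sum_in_comp_output_le K x : x \notin K ->
  \sum_(X : design n L T) (x \in comp_output X K)%:R <= N * cover_bound R #|K| L T.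
Proof.
move=> xK; have disj : [disjoint draws_of L [set x] & draws_of L K].
  apply/pred0P => -[y j]; rewrite !inE !andbT /=.
  by apply: contraNF xK => /andP[/eqP<-].
under eq_bigr => X _ do rewrite in_comp_output -(set0U (tests_of (draws_of L [set x]) X)).
have := sum_subset_tests_of_disjoint_le R T_gt0 (D := set0) (l := L) disj.
by rewrite !card_draws_of cards1 mul1n cards0 expr0 mulr1; apply.
Qed.

Lemma comp_fail_le_sum X K :
  (comp_output X K != K)%:R <= \sum_(x | x \notin K) (x \in comp_output X K)%:R :> R.
Proof.
have [_|out_neq] := eqVneq; first by rewrite sumr_ge0.
have [x xout xK] : exists2 x, x \in comp_output X K & x \notin K.
  by apply/subsetPn; apply: contra out_neq => outK; rewrite eqEsubset outK sub_comp_output.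
by rewrite (bigD1 x) //= xout lerDl sumr_ge0.
Qed.

Lemma sum_comp_fail_le K :
  \sum_(X : design n L T) (comp_output X K != K)%:R <= n%:R * (N * cover_bound R #|K| L T).
Proof.
apply: le_trans (ler_sum _ (fun X _ => comp_fail_le_sum X K)) _.
rewrite exchange_big /=.
apply: le_trans (ler_sum _ (fun x xK => sum_in_comp_output_le xK)) _.
rewrite sumr_const -(mulr_natr (N * cover_bound R #|K| L T)) [in leRHS]mulrC.
rewrite ler_wpM2l ?mulr_ge0 ?exprn_ge0 ?cover_base_ge0 // ler_nat.
by rewrite -[X in (_ <= X)%N](card_ord n) max_card.
Qed.

End UnionBound.

Section FailureProbability.
Variables (R : realType) (n k L T : nat).
Hypotheses (T_gt0 : (0 < T)%N) (k_le_n : (k <= n)%N).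
Local Notation A := [set K : {set 'I_n} | #|K| == k].
Local Notation N := #|{: design n L T}|.

Lemma card_sample_space_gt0 : (0 < #|A| * N)%N.
Proof.
rewrite muln_gt0 card_draws card_ord bin_gt0 k_le_n /=.
by apply/card_gt0P; exists [ffun=> [ffun=> Ordinal T_gt0]].
Qed.

Lemma comp_failure_probE :
  1 - comp_success_prob R n k L T =
    (\sum_(K in A) \sum_(X : design n L T) (comp_output X K != K)%:R) / (#|A| * N)%:R.
Proof.
have succE : #|[set p : {set 'I_n} * design n L T |
                (#|p.1| == k) && (comp_output p.2 p.1 == p.1)]|%:R =
             \sum_(K in A) \sum_(X : design n L T) (comp_output X K == K)%:R :> R.
  rewrite (eq_bigr (fun K => \sum_(X : design n L T | comp_output X K == K) 1)); last first.
    by move=> K _; rewrite [RHS]big_mkcond; apply: eq_bigr => X _; case: eqP.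
  rewrite pair_big_dep sumr_const; apply/congr1/eq_card => -[K X].
  by rewrite inE unfold_in /= inE.
have ANE : (#|A| * N)%:R = \sum_(K in A) \sum_(X : design n L T) 1 :> R.
  by rewrite natrM mulr_natl !sumr_const.
have AN_neq0 : (#|A| * N)%:R != 0 :> R by rewrite pnatr_eq0 -lt0n card_sample_space_gt0.
rewrite /comp_success_prob cardsT -{1}(divff AN_neq0) -mulrBl succE ANE -sumrB.
congr (_ / _); apply: eq_bigr => K _; rewrite -sumrB; apply: eq_bigr => X _.
by case: eqP; rewrite ?subrr ?subr0.
Qed.

Lemma comp_failure_le :
  0 <= 1 - comp_success_prob R n k L T <= n%:R * cover_bound R k L T.
Proof.
rewrite comp_failure_probE divr_ge0 ?ler0n ?sumr_ge0 //=; last first.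
  by move=> K _; apply: sumr_ge0.
rewrite ler_pdivrMr ?ltr0n ?card_sample_space_gt0 //.
apply: le_trans (_ : \sum_(K in A) n%:R * (N%:R * cover_bound R k L T) <= _).
  by apply: ler_sum => K; rewrite inE => /eqP <-; exact: sum_comp_fail_le.
rewrite sumr_const -(mulr_natr (n%:R * (N%:R * cover_bound R k L T))) natrM.
by rewrite le_eqVlt; apply/predU1l; ring.
Qed.

End FailureProbability.

Section RealFacts.
Variable R : realType.
Implicit Types x y a : R.

Lemma ln2_gt0 : 0 < ln (2 : R).
Proof. by rewrite ln_gt0 // ltr1n. Qed.

Lemma expR_Nln2 : expR (- ln (2 : R)) = 2^-1.
Proof. by rewrite expRN lnK // posrE. Qed.

Lemma sqr_le_expR y : 0 <= y -> y ^+ 2 <= 4 * expR y.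
Proof.
move=> y_ge0; have -> : y = 2%:R * (y / 2) by rewrite mulrC divfK.
rewrite expRM_natl (_ : 4 = 2 ^+ 2) -?exprMn; last by rewrite -natrX.
apply: lerXn2r; rewrite ?nnegrE ?mulr_ge0 ?expR_ge0 //.
by apply: ler_wpM2l => //; apply: le_trans (expR_ge1Dx _); rewrite lerDr.
Qed.

Lemma sqr_ln_le x : 1 <= x -> ln x ^+ 2 <= 4 * x.
Proof.
move=> x_ge1; rewrite -{2}[x]lnK ?posrE ?(lt_le_trans ltr01) //.
by rewrite sqr_le_expR // ln_ge0.
Qed.

Lemma truncn_gt_subr1 a : a - 1 < (Num.truncn a)%:R.
Proof. by rewrite ltrBlDr natr1 truncnS_gt. Qed.

Lemma p_hit_le_half (T m : nat) : (2 <= T)%N -> m%:R <= T%:R * ln 2 :> R ->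
  p_hit R T m <= 2^-1 + ln 2 / (2 * (T%:R - 1)).
Proof.
(* 1 - 1/T >= exp (-1/(T-1)), so (1 - 1/T)^m >= exp (-ln 2 - ln 2/(T-1)). *)
move=> T_ge2 mT; set s : R := T%:R - 1.
have s_gt0 : 0 < s by rewrite subr_gt0 (@ltr_nat R 1).
have T_eq : T%:R = s + 1 by rewrite subrK.
have miss_ge : expR (- s^-1) <= 1 - T%:R^-1.
  rewrite expRN T_eq (_ : 1 - (s + 1)^-1 = (1 + s^-1)^-1); last first.
    by field; rewrite -?T_eq ?pnatr_eq0 -?lt0n ?(ltn_trans _ T_ge2) ?gt_eqF.
  by rewrite lef_pV2 ?posrE ?expR_gt0 ?addr_gt0 ?invr_gt0 // expR_ge1Dx.
have pow_ge : expR (- (T%:R * ln 2) / s) <= (1 - T%:R^-1) ^+ m.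
  apply: le_trans (_ : expR (m%:R * - s^-1) <= _).
    by rewrite ler_expR mulrN mulNr lerN2 ler_pM2r ?invr_gt0.
  by rewrite expRM_natl lerXn2r ?nnegrE ?expR_ge0 // (le_trans _ miss_ge) ?expR_ge0.
have split_exp : - (T%:R * ln 2) / s = - ln 2 + - (ln 2 / s).
  by rewrite T_eq; field; rewrite gt_eqF.
rewrite split_exp expRD expR_Nln2 in pow_ge.
have : 1 - ln 2 / s <= expR (- (ln 2 / s)) by exact: expR_ge1Dx.
have -> : ln 2 / (2 * s) = 2^-1 * (ln 2 / s) by field; rewrite gt_eqF.
rewrite /p_hit; nra.
Qed.

Lemma cover_base_le (T k L : nat) (g : R) : 0 < g ->
    ln 2 / g + 1 <= T%:R -> 2 * ln 2 / g <= k%:R -> L%:R <= T%:R * ln 2 / k%:R :> R ->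
  cover_base R k L T <= 2^-1 + g.
Proof.
move=> g_gt0 T_ge k_ge L_le; have l2_gt0 := ln2_gt0.
have k_gt0 : 0 < k%:R :> R by apply: lt_le_trans k_ge; rewrite !divr_gt0 ?mulr_gt0.
have T_gt1 : 1 < T%:R :> R by apply: lt_le_trans T_ge; rewrite ltrDr divr_gt0.
have kL : (k * L)%:R <= T%:R * ln 2 :> R by rewrite natrM mulrC -ler_pdivlMr.
have T_ge2 : (2 <= T)%N by rewrite -(ltr_nat R).
have q_le := p_hit_le_half T_ge2 kL.
have q_err : ln 2 / (2 * (T%:R - 1)) <= g / 2.
  rewrite -lerBrDr ler_pdivrMr // in T_ge.
  by rewrite ler_pdivrMr ?mulr_gt0 ?subr_gt0 //; lra.
have L_err : L%:R / T%:R <= g / 2.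
  rewrite ler_pdivrMr // in k_ge.
  apply: le_trans (_ : ln 2 / k%:R <= _).
    by rewrite ler_pdivrMr ?(lt_trans ltr01 T_gt1) //; lra.
  by rewrite ler_pdivrMr //; lra.
rewrite /cover_base; lra.
Qed.

End RealFacts.

Local Open Scope classical_set_scope.

Lemma ln_nat_ge (R : realType) (M : R) : \forall n \near \oo, M <= ln (n%:R : R).
Proof.
near=> n; have n_ge : expR M <= n%:R by near: n; exact: nbhs_infty_ger.
by rewrite -ler_expR lnK // posrE (lt_le_trans (expR_gt0 M)).
Unshelve. all: by end_near. Qed.

Section Asymptotics.
Variables (R : realType) (lam eps : R).
Hypotheses (lam_gt0 : 0 < lam) (eps_gt0 : 0 < eps).

Lemma kdef_arg_ge (c x : R) : 1 <= x -> 1 <= ln x -> 4 * c <= lam * ln x ->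
  c <= lam * x / ln x.
Proof.
move=> x_ge1 y_ge1 c_le; rewrite ler_pdivlMr ?(lt_le_trans ltr01) //.
have := ler_wpM2l (ltW lam_gt0) (sqr_ln_le x_ge1).
have := ler_wpM2r (le_trans ler01 y_ge1) c_le.
nra.
Qed.

Lemma kdef_arg_le (x : R) : 0 <= x -> 0 < ln x -> lam <= ln x -> lam * x / ln x <= x.
Proof. by move=> x_ge0 y_gt0 lam_le; rewrite ler_pdivrMr // mulrC ler_wpM2l. Qed.

Lemma kdef_ge (c : R) : \forall n \near \oo, c <= (kdef lam n)%:R.
Proof.
near=> n; apply: le_trans (ltW (truncn_gt_subr1 _)); rewrite lerBrDr.
apply: kdef_arg_ge.
- by near: n; exact: nbhs_infty_ger.
- by near: n; exact: ln_nat_ge.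
- by rewrite -ler_pdivrMl //; near: n; exact: ln_nat_ge.
Unshelve. all: by end_near. Qed.

Lemma kdef_le : \forall n \near \oo, (kdef lam n <= n)%N.
Proof.
near=> n.
have y_ge1 : 1 <= ln (n%:R : R) by near: n; exact: ln_nat_ge.
have y_ge : lam <= ln (n%:R : R) by near: n; exact: ln_nat_ge.
have y_gt0 := lt_le_trans ltr01 y_ge1.
rewrite -(ler_nat R); apply: le_trans (kdef_arg_le _ y_gt0 y_ge) => //.
by rewrite /kdef truncn_le divr_ge0 ?(ltW y_gt0) // mulr_ge0 // ltW.
Unshelve. all: by end_near. Qed.

Lemma Tdef_ge (c : R) : \forall n \near \oo, c <= (Tdef lam eps n)%:R.
Proof.
have c'_gt0 : 0 < (1 + eps) * lam / ln (2 : R) ^+ 2.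
  by rewrite divr_gt0 ?mulr_gt0 ?exprn_gt0 ?ln2_gt0 ?addr_gt0.
near=> n; apply: le_trans (ltW (truncn_gt_subr1 _)); rewrite lerBrDr -ler_pdivrMl //.
by near: n; exact: nbhs_infty_ger.
Unshelve. all: by end_near. Qed.

Lemma Ldef_arg_ge (x y Tr kr : R) : 0 < y -> y <= x -> 0 < kr -> kr <= lam * x / y ->
  0 <= Tr -> (1 + eps) * lam / ln 2 ^+ 2 * x - 1 <= Tr ->
  (1 + eps) / ln 2 * y - ln 2 / lam <= Tr * ln 2 / kr.
Proof.
move=> y_gt0 y_le_x kr_gt0 kr_le T_ge0 T_ge.
have x_gt0 := lt_le_trans y_gt0 y_le_x; have l2_gt0 := @ln2_gt0 R.
have kr_inv : Tr * ln 2 * (y / (lam * x)) <= Tr * ln 2 / kr.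
  apply: ler_wpM2l; first by rewrite mulr_ge0 // ltW.
  by rewrite -invf_div lef_pV2 ?posrE ?divr_gt0 ?mulr_gt0.
have T_low : (((1 + eps) * lam / ln 2 ^+ 2 * x - 1) * ln 2) * (y / (lam * x)) <=
             Tr * ln 2 * (y / (lam * x)).
  apply: ler_wpM2r; first by rewrite divr_ge0 ?mulr_ge0 // ltW.
  by apply: ler_wpM2r => //; apply: ltW.
have T_lowE : (((1 + eps) * lam / ln 2 ^+ 2 * x - 1) * ln 2) * (y / (lam * x)) =
              (1 + eps) / ln 2 * y - ln 2 / lam * (y / x).
  by field; rewrite !gt_eqF.
have y_div_x : ln 2 / lam * (y / x) <= ln 2 / lam.
  by rewrite ler_piMr ?divr_ge0 ?ler_pdivrMr ?mul1r // ltW.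
lra.
Qed.

Lemma Ldef_ge : \forall n \near \oo,
  (1 + eps) / ln 2 * ln (n%:R : R) - (ln 2 / lam + 1) <= (Ldef lam eps n)%:R.
Proof.
near=> n; apply: le_trans (ltW (truncn_gt_subr1 _)); rewrite opprD addrA lerD2r.
have y_ge1 : 1 <= ln (n%:R : R) by near: n; exact: ln_nat_ge.
have y_gt0 := lt_le_trans ltr01 y_ge1.
have n_gt0 : 0 < n%:R :> R.
  by rewrite ltNge; apply: contraTN y_gt0 => /ln0->; rewrite ltxx.
apply: (Ldef_arg_ge (x := n%:R)) => //.
- exact/ltW/ln_sublinear.
- by apply: (lt_le_trans ltr01); near: n; exact: kdef_ge.
- by rewrite /kdef truncn_le divr_ge0 ?mulr_ge0 // ltW.
- exact/ltW/truncn_gt_subr1.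
Unshelve. all: by end_near. Qed.

Lemma cover_base_le_expR (b : R) : b < ln 2 -> \forall n \near \oo,
  cover_base R (kdef lam n) (Ldef lam eps n) (Tdef lam eps n) <= expR (- b).
Proof.
move=> b_lt; set g := expR (- b) - 2^-1.
have g_gt0 : 0 < g by rewrite subr_gt0 -expR_Nln2 ltr_expR ltrN2.
near=> n; rewrite -(subrKC 2^-1 (expR (- b))) -/g.
apply: cover_base_le g_gt0 _ _ _.
- by near: n; exact: Tdef_ge.
- by near: n; exact: kdef_ge.
- by rewrite /Ldef truncn_le divr_ge0 ?mulr_ge0 // ltW // ln2_gt0.
Unshelve. all: by end_near. Qed.

Lemma union_bound_vanishes (e : R) : 0 < e -> \forall n \near \oo,
  n%:R * cover_bound R (kdef lam n) (Ldef lam eps n) (Tdef lam eps n) <= e.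
Proof.
move=> e_gt0; have l2_gt0 := @ln2_gt0 R.
(* b < ln 2 with b (1 + eps) / ln 2 = 1 + eps / 2, so n e^(-b L) <= C n^(-eps/2). *)
set b := (1 + eps / 2) * ln 2 / (1 + eps).
have eps2_gt0 : 0 < eps / 2 by rewrite divr_gt0.
have b_gt0 : 0 < b by apply: divr_gt0; [apply: mulr_gt0|]; lra.
have b_lt : b < ln 2.
  by have := mulr_gt0 eps2_gt0 l2_gt0; rewrite ltr_pdivrMr; lra.
have ab : b * ((1 + eps) / ln 2) = 1 + eps / 2.
  by rewrite /b; field; rewrite gt_eqF //=; lra.
near=> n.
have n_ge1 : 1 <= n%:R :> R by near: n; exact: nbhs_infty_ger.
have T_gt0 : (0 < Tdef lam eps n)%N by rewrite -(ler_nat R); near: n; exact: Tdef_ge.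
apply: le_trans (_ : n%:R * expR (- b) ^+ Ldef lam eps n <= _).
  apply: ler_wpM2l => //; apply: lerXn2r; rewrite ?nnegrE ?expR_ge0 ?cover_base_ge0 //.
  by near: n; exact: cover_base_le_expR.
have L_ge : (1 + eps) / ln 2 * ln (n%:R : R) - (ln 2 / lam + 1) <= (Ldef lam eps n)%:R.
  by near: n; exact: Ldef_ge.
have := ler_wpM2l (ltW b_gt0) L_ge; rewrite mulrBr mulrA ab => {}L_ge.
have y_ge : 2 * (b * (ln 2 / lam + 1) - ln e) / eps <= ln (n%:R : R).
  by near: n; exact: ln_nat_ge.
rewrite ler_pdivrMr // in y_ge.
rewrite -expRM_natl -[n%:R]lnK ?posrE ?(lt_le_trans ltr01) // -expRD.
rewrite -[e]lnK ?posrE // ler_expR.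
lra.
Unshelve. all: by end_near. Qed.

End Asymptotics.

Theorem theorem2 (R : realType) (lam eps : R) (hlam : 0 < lam) (heps : 0 < eps) :
  comp_prob lam eps n @[n --> \oo] --> (1 : R).
Proof.
apply/cvgrPdist_le => e e_gt0; near=> n.
have T_gt0 : (0 < Tdef lam eps n)%N by rewrite -(ler_nat R); near: n; exact: Tdef_ge.
have k_le : (kdef lam n <= n)%N by near: n; exact: kdef_le.
have /andP[fail_ge0 fail_le] := comp_failure_le R (Ldef lam eps n) T_gt0 k_le.
rewrite /comp_prob ger0_norm //; apply: le_trans fail_le _.
by near: n; exact: union_bound_vanishes.
Unshelve. all: by end_near. Qed.
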